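(* Let $A$ and $B$ be $3$-dimensional boxes with closed side lengths $a_1\le a_2\le a_3$ and $b_1\le b_2\le b_3$, such that both the arrangement with $A$ inside $B$ and the arrangement with $B$ inside $A$ are possible, and suppose $a_1\le b_1$. Then the side lengths satisfy one of the following four chains, where in each chain no two adjacent inequalities are both equalities: Type 1: $a_1\le b_1<a_2\le b_2<a_3\le b_3$; Type 2: $a_1\le b_1<a_2\le b_2\le b_3<a_3$; Type 3: $a_1\le b_1\le b_2<a_2\le a_3\le b_3$; Type 4: $a_1\le b_1\le b_2<a_2<b_3<a_3$.
   Context: A $3$-dimensional box $A$ has closed side lengths $a_1\le a_2\le a_3$ (positive reals). A state of $A$ is either closed or expanded along one side $i$: $a_i$ is replaced by $a_i'$ with $a_i\le a_i'\le 2a_i$, other sides unchanged (only one side can expand). The dimension vector of a state is its side lengths sorted non-decreasingly. A box in some state fits inside another box in some state if each coordinate of the outer one's dimension vector is strictly larger than the corresponding coordinate of the inner one's. The arrangement ''$X$ inside $Y$'' is possible if $X$ and $Y$ can be given states so that $X$ fits inside $Y$. *)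

From mathcomp Require Import all_boot all_order all_algebra.
Set Implicit Arguments. Unset Strict Implicit. Unset Printing Implicit Defensive.
Import Order.TTheory GRing.Theory Num.Theory.
Local Open Scope ring_scope.

Section Boxes.
Variable R : realFieldType.

(* A 3-dimensional box is given by its closed side lengths a : 'I_3 -> R. *)
(* A state of the box a: closed, or expanded along exactly one side i,
   with a i <= s i <= 2 a i and the other sides unchanged. *)
Definition is_state (a s : 'I_3 -> R) : Prop :=
  s = a \/
  exists i : 'I_3, a i <= s i <= 2 * a i /\ (forall j, j != i -> s j = a j).

Definition dimvec (s : 'I_3 -> R) : seq R := sort <=%R [seq s i | i : 'I_3].

Definition fits (s t : 'I_3 -> R) : Prop :=
  forall k : 'I_3, nth 0 (dimvec s) k < nth 0 (dimvec t) k.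

Definition possible (a b : 'I_3 -> R) : Prop :=
  exists s t, is_state a s /\ is_state b t /\ fits s t.

Definition box3 (x1 x2 x3 : R) : 'I_3 -> R := fun i => nth 0 [:: x1; x2; x3] i.

End Boxes.

From mathcomp Require Import all_boot all_order all_algebra.
From mathcomp Require Import lra.
Set Implicit Arguments. Unset Strict Implicit. Unset Printing Implicit Defensive.
Import Order.TTheory GRing.Theory Num.Theory.

(* Compare the boxes through their order statistics.  Putting A into a state
   can only increase its k-th smallest side, while expanding a single side of
   B raises its k-th smallest side to at most its (k+1)-th smallest closed
   side.  So if A fits into B then a1 < b2 and a2 < b3, and symmetrically
   b1 < a2 and b2 < a3; given a1 <= b1, the four types are the four outcomes of
   comparing a2 with b2 and a3 with b3. *)

Section OrderStatistics.
Variables (d : Order.disp_t) (T : orderType d).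
Local Open Scope order_scope.

Lemma nth_sort_le_count x0 (s : seq T) x i : (i < size s)%N ->
  (nth x0 (sort <=%O s) i <= x) = (i < count (<= x) s)%N.
Proof.
move=> lt_i_s; have /permP <- : perm_eq (sort <=%O s) s by rewrite perm_sort.
have sorted_s := sort_sorted (@le_total _ T) s.
apply/idP/idP => [|/(nth_count_le x0 sorted_s)//].
apply: contraLR; rewrite -leqNgt -ltNge => le_count.
by apply: nth_count_gt => //; rewrite le_count size_sort.
Qed.

Variables (I : eqType) (r : seq I).

Lemma nth_sort_map_le (f g : I -> T) x0 i :
  (forall k, f k <= g k) -> (i < size r)%N ->
  nth x0 (sort <=%O (map f r)) i <= nth x0 (sort <=%O (map g r)) i.
Proof.
move=> le_fg lt_i_r; set y := nth x0 (sort _ (map g r)) i.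
have : (i < count (<= y) (map g r))%N.
  by rewrite -(nth_sort_le_count x0) ?size_map.
rewrite nth_sort_le_count ?size_map // !count_map => /leq_trans; apply.
by apply: sub_count => k /= /(le_trans (le_fg k)).
Qed.

Lemma nth_sort_map_update (f g : I -> T) j x0 i :
  uniq r -> (forall k, k != j -> f k = g k) -> (i.+1 < size r)%N ->
  nth x0 (sort <=%O (map f r)) i <= nth x0 (sort <=%O (map g r)) i.+1.
Proof.
move=> uniq_r fg lt_i_r; set y := nth x0 (sort _ (map g r)) i.+1.
have : (i.+1 < count (<= y) (map g r))%N.
  by rewrite -(nth_sort_le_count x0) ?size_map.
rewrite nth_sort_le_count ?size_map ?(ltnW lt_i_r) // !count_map.
have le_count :
    (count (fun k => g k <= y)%O r <= count (fun k => f k <= y)%O r + 1)%N.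
  set A := (fun k => f k <= y)%O.
  apply: (@leq_trans (count (predU A (pred1 j)) r)).
    apply: sub_count => k /=.
    by case: (eqVneq k j) => [_|/fg <-]; rewrite ?orbT ?orbF.
  apply: leq_trans (leq_addr (count (predI A (pred1 j)) r) _) _.
  by rewrite count_predUI leq_add2l count_uniq_mem // leq_b1.
by move=> /leq_trans /(_ le_count); rewrite addn1 ltnS.
Qed.

End OrderStatistics.

Local Open Scope ring_scope.

Section Boxes.
Variable R : realFieldType.
Implicit Types a b s t : 'I_3 -> R.

Lemma is_state_le a s : is_state a s -> forall i, a i <= s i.
Proof.
case=> [-> //|[i [/andP[le_as _] eq_as]]] k.
by case: (eqVneq k i) => [->|/eq_as->].
Qed.

Lemma is_state_update a s :
  is_state a s -> exists j, forall i, i != j -> s i = a i.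
Proof. by case=> [->|[j [_ eq_as]]]; [exists ord0 | exists j]. Qed.

Lemma dimvec_box3 (x1 x2 x3 : R) : x1 <= x2 -> x2 <= x3 ->
  dimvec (box3 x1 x2 x3) = [:: x1; x2; x3].
Proof.
move=> le12 le23; rewrite /dimvec /image_mem !enum_ordSl enum_ord0 /=.
by rewrite sort_le_id //= le12 le23.
Qed.

Lemma possible_dimvec_lt a b i : possible a b -> (i.+1 < 3)%N ->
  nth 0 (dimvec a) i < nth 0 (dimvec b) i.+1.
Proof.
move=> [s [t [/is_state_le le_as [/is_state_update [j eq_tb] fit_st]]]] lt_i3.
have lt_i_enum : (i.+1 < size (enum 'I_3))%N by rewrite size_enum_ord.
rewrite /fits /dimvec /image_mem in fit_st *.
apply: le_lt_trans (nth_sort_map_le _ le_as (ltnW lt_i_enum)) _.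
apply: lt_le_trans (fit_st (Ordinal (ltnW lt_i3))) _.
exact: nth_sort_map_update (enum_uniq _) eq_tb lt_i_enum.
Qed.

Lemma possible_box3_lt (a1 a2 a3 b1 b2 b3 : R) :
  a1 <= a2 -> a2 <= a3 -> b1 <= b2 -> b2 <= b3 ->
  possible (box3 a1 a2 a3) (box3 b1 b2 b3) -> a1 < b2 /\ a2 < b3.
Proof.
move=> le_a12 le_a23 le_b12 le_b23 AinB.
have := possible_dimvec_lt (i := 0) AinB isT.
have := possible_dimvec_lt (i := 1) AinB isT.
by rewrite !dimvec_box3.
Qed.

End Boxes.

Theorem theorem29 (R : realFieldType) (a1 a2 a3 b1 b2 b3 : R) :
  0 < a1 -> a1 <= a2 -> a2 <= a3 ->
  0 < b1 -> b1 <= b2 -> b2 <= b3 ->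
  possible (box3 a1 a2 a3) (box3 b1 b2 b3) ->
  possible (box3 b1 b2 b3) (box3 a1 a2 a3) ->
  a1 <= b1 ->
  (* Type 1 *)
  [/\ a1 <= b1, b1 < a2, a2 <= b2, b2 < a3 & a3 <= b3]
  (* Type 2 *)
  \/ ([/\ a1 <= b1, b1 < a2, a2 <= b2, b2 <= b3 & b3 < a3]
      /\ ~ (a2 = b2 /\ b2 = b3))
  (* Type 3 *)
  \/ ([/\ a1 <= b1, b1 <= b2, b2 < a2, a2 <= a3 & a3 <= b3]
      /\ ~ (a1 = b1 /\ b1 = b2) /\ ~ (a2 = a3 /\ a3 = b3))
  (* Type 4 *)
  \/ ([/\ a1 <= b1, b1 <= b2, b2 < a2, a2 < b3 & b3 < a3]
      /\ ~ (a1 = b1 /\ b1 = b2)).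
Proof.
move=> _ le_a12 le_a23 _ le_b12 le_b23 AinB BinA le_a1b1.
have [lt_a1b2 lt_a2b3] := possible_box3_lt le_a12 le_a23 le_b12 le_b23 AinB.
have [lt_b1a2 lt_b2a3] := possible_box3_lt le_b12 le_b23 le_a12 le_a23 BinA.
case: (lerP a2 b2) => [le_a2b2|lt_b2a2];
  case: (lerP a3 b3) => [le_a3b3|lt_b3a3].
- by left; split.
- by right; left; split; [split | lra].
- by right; right; left; split; [split | split]; lra.
- by right; right; right; split; [split | lra].
Qed.
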